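(* Fix an environment $(\mathcal{S},\mathcal{A},\mathcal{T},d_0,\_,\gamma)$ and a set $\Pi$ of stationary policies whose discounted visit counts are collinear, i.e. all vectors $\mathcal{F}^\pi$, $\pi\in\Pi$, lie on a single line in $\mathbb{R}^{|\mathcal{S}||\mathcal{A}|}$. Then every pair of reward functions $(\mathcal{R},\mathcal{R}')$ such that $J_{\mathcal{R}}$ and $J_{\mathcal{R}'}$ are both non-trivial on $\Pi$ and not equivalent on $\Pi$ is hackable relative to $\Pi$ and this environment.
   Context: A Markov decision process is $(\mathcal{S},\mathcal{A},\mathcal{T},d_0,\mathcal{R},\gamma)$ with finite $\mathcal{S}$, finite $\mathcal{A}$ with $|\mathcal{A}|>1$, transition model $\mathcal{T}:\mathcal{S}\times\mathcal{A}\to\Delta(\mathcal{S})$, initial distribution $d_0$, reward $\mathcal{R}:\mathcal{S}\times\mathcal{A}\to\mathbb{R}$, $\gamma\in[0,1)$; all states reachable. An environment is an MDP without its reward function. A stationary policy is $\pi:\mathcal{S}\to\Delta(\mathcal{A})$. The discounted visit counts are $\mathcal{F}^\pi(s,a)=\mathbb{E}\big[\sum_{t\ge0}\gamma^t\mathbb{1}(s_t=s,a_t=a)\big]$ with $s_0\sim d_0$, $a_t\sim\pi(\cdot\mid s_t)$, $s_{t+1}\sim\mathcal{T}(\cdot\mid s_t,a_t)$, and $J_{\mathcal{R}}(\pi)=\langle\mathcal{R},\mathcal{F}^\pi\rangle$. $J$ is trivial on $\Pi$ if constant on $\Pi$; $J_1,J_2$ are equivalent on $\Pi$ if for all $\pi,\pi'\in\Pi$,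 $J_1(\pi)\ge J_1(\pi')\iff J_2(\pi)\ge J_2(\pi')$. Reward functions $\mathcal{R},\mathcal{R}'$ are hackable relative to $\Pi$ and an environment if there exist $\pi,\pi'\in\Pi$ with $J_{\mathcal{R}}(\pi)>J_{\mathcal{R}}(\pi')$ and $J_{\mathcal{R}'}(\pi')>J_{\mathcal{R}'}(\pi)$; otherwise unhackable. *)

From HB Require Import structures.
From mathcomp Require Import all_boot all_order all_algebra.
From mathcomp Require Import all_classical all_reals.
From mathcomp Require Import topology normedtype sequences.
Set Implicit Arguments. Unset Strict Implicit. Unset Printing Implicit Defensive.
Import Order.TTheory GRing.Theory Num.Theory numFieldNormedType.Exports.
Local Open Scope ring_scope.

Section MDP.
Variables (R : realType) (S A : finType).

Definition is_distr (T : finType) (p : T -> R) : Prop :=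
  (forall x, 0 <= p x) /\ \sum_(x : T) p x = 1.

(* An environment (S, A, T, d0, _, gamma): transition model T s a s',
   initial distribution d0, discount gamma. *)
Record env := Env {
  trans : S -> A -> S -> R;
  init : S -> R;
  disc : R }.

(* stationary policy pi s a = pi(a | s) *)
Definition policy := S -> A -> R.

Definition is_policy (pi : policy) : Prop := forall s, is_distr (pi s).

Fixpoint state_dist (E : env) (pi : policy) (t : nat) : S -> R :=
  match t with
  | 0 => init E
  | t'.+1 => fun s' =>
      \sum_(s : S) \sum_(a : A) state_dist E pi t' s * pi s a * trans E s a s'
  end.

Definition visit (E : env) (pi : policy) (s : S) (a : A) : R :=
  limn (fun n => \sum_(0 <= t < n) disc E ^+ t * (state_dist E pi t s * pi s a)).

Definition J (E : env) (Rw : S -> A -> R) (pi : policy) : R :=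
  \sum_(s : S) \sum_(a : A) Rw s a * visit E pi s a.

Definition valid_env (E : env) : Prop :=
  [/\ forall s a, is_distr (trans E s a),
      is_distr (init E),
      0 <= disc E < 1,
      (1 < #|A|)%N &
      forall s, exists pi, is_policy pi /\ exists t, 0 < state_dist E pi t s].

Definition trivial_on (Pi : set policy) (f : policy -> R) : Prop :=
  forall pi pi', Pi pi -> Pi pi' -> f pi = f pi'.

Definition equiv_on (Pi : set policy) (f g : policy -> R) : Prop :=
  forall pi pi', Pi pi -> Pi pi' -> (f pi' <= f pi <-> g pi' <= g pi).

Definition hackable (E : env) (Pi : set policy) (R1 R2 : S -> A -> R) : Prop :=
  exists pi pi', [/\ Pi pi, Pi pi', J E R1 pi' < J E R1 pi & J E R2 pi < J E R2 pi'].

Definition collinear_visits (E : env) (Pi : set policy) : Prop :=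
  exists (p v : S -> A -> R), (exists s a, v s a != 0) /\
    forall pi, Pi pi -> exists c : R, forall s a, visit E pi s a = p s a + c * v s a.

End MDP.

(* Along the line p + c v, every J_Rw is the affine function
   <Rw,p> + c <Rw,v> of the single coordinate c.  Non-triviality makes both
   slopes <Rw,v> and <Rw',v> non-zero, so J_Rw and J_Rw' have the same level
   sets on Pi; two functions with the same level sets that are nowhere ordered
   in opposite directions induce the same preorder, i.e. they are equivalent. *)
From HB Require Import structures.
From mathcomp Require Import all_boot all_order all_algebra.
From mathcomp Require Import all_classical all_reals.
From mathcomp Require Import topology normedtype sequences.
Import Order.TTheory GRing.Theory Num.Theory numFieldNormedType.Exports.
Set Implicit Arguments.
Unset Strict Implicit.
Local Open Scope ring_scope.

Lemma le_transfer (T : Type) (R : realDomainType) (f g : T -> R) (x y : T) :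
  (f x = f y <-> g x = g y) -> ~ (f y < f x /\ g x < g y) ->
  f y <= f x -> g y <= g x.
Proof.
move=> same_level no_opposite; rewrite le_eqVlt => /orP [/eqP fyx | ltf].
  by rewrite (proj1 same_level (esym fyx)).
by rewrite leNgt; apply/negP => ltg; apply: no_opposite.
Qed.

Section CollinearVisits.
Variables (R : realType) (S A : finType) (E : env R S A).
Variables (Pi : set (policy R S A)) (p v : S -> A -> R).
Hypothesis visit_on_line :
  forall pi, Pi pi -> exists c : R, forall s a, visit E pi s a = p s a + c * v s a.

Definition pairing (Rw x : S -> A -> R) : R := \sum_s \sum_a Rw s a * x s a.

Lemma J_on_line pi : Pi pi ->
  exists c : R, forall Rw, J E Rw pi = pairing Rw p + c * pairing Rw v.
Proof.
move=> /visit_on_line [c visitE]; exists c => Rw.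
rewrite /J /pairing mulr_sumr -big_split /=; apply: eq_bigr => s _.
rewrite mulr_sumr -big_split /=; apply: eq_bigr => a _.
by rewrite visitE mulrDr mulrCA.
Qed.

Lemma pairing_v_neq0 Rw : ~ trivial_on Pi (J E Rw) -> pairing Rw v != 0.
Proof.
move=> nontrivial; apply/eqP => slope0; apply: nontrivial.
move=> pi pi' /J_on_line [c ->] /J_on_line [c' ->].
by rewrite slope0 !mulr0.
Qed.

Lemma J_eq_iff Rw Rw' pi pi' :
  pairing Rw v != 0 -> pairing Rw' v != 0 -> Pi pi -> Pi pi' ->
  (J E Rw pi = J E Rw pi' <-> J E Rw' pi = J E Rw' pi').
Proof.
move=> slope_neq0 slope'_neq0 /J_on_line [c Jpi] /J_on_line [c' Jpi'].
have same_coord (w : S -> A -> R) : pairing w v != 0 ->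
    J E w pi = J E w pi' <-> c = c'.
  by move=> w_neq0; rewrite Jpi Jpi'; split => [/addrI/(mulIf w_neq0) | ->].
by rewrite same_coord // same_coord.
Qed.

End CollinearVisits.

Theorem mainTheorem2 (R : realType) (S A : finType) (E : env R S A)
  (Pi : set (policy R S A)) :
  valid_env E ->
  (forall pi, Pi pi -> is_policy pi) ->
  collinear_visits E Pi ->
  forall Rw Rw' : S -> A -> R,
    ~ trivial_on Pi (J E Rw) ->
    ~ trivial_on Pi (J E Rw') ->
    ~ equiv_on Pi (J E Rw) (J E Rw') ->
    hackable E Pi Rw Rw'.
Proof.
move=> _ _ [p [v [_ online]]] Rw Rw' nt nt' not_equiv.
case: (pselect (hackable E Pi Rw Rw')) => // unhackable; exfalso.
apply: not_equiv => pi pi' Ppi Ppi'.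
have same_level := J_eq_iff online (pairing_v_neq0 online nt)
  (pairing_v_neq0 online nt') Ppi Ppi'.
split; apply: le_transfer.
- exact: same_level.
- by move=> [ltJ ltJ']; apply: unhackable; exists pi, pi'.
- exact: iff_sym same_level.
- by move=> [ltJ' ltJ]; apply: unhackable; exists pi', pi.
Qed.
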